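(* Let $w\in\mathfrak{S}_n$ be Bruhat irreducible and almost reducible at $(J,i)$. Then $J=\{s_1,\ldots,s_i\}$ or $J=\{s_i,\ldots,s_{n-1}\}$.
   Context: $\mathfrak{S}_n$ is the Coxeter group with $S=\{s_1,\ldots,s_{n-1}\}$, $s_i=(i\ i{+}1)$, length $\ell$. $\supp(x)$ is the set of simple generators in a reduced word for $x$; $D_L(x)=\{s\in S:\ell(sx)<\ell(x)\}$, $D_R(x)=\{s\in S:\ell(xs)<\ell(x)\}$. For $J\subseteq S$, $x=x^Jx_J$ is the parabolic decomposition with $x_J$ in the subgroup $W_J$ generated by $J$ and $x^J$ the minimal-length element of $xW_J$. It is a BP-decomposition if $\supp(x^J)\cap J\subseteq D_L(x_J)$. $w$ is Bruhat irreducible if $\supp(w)=S$ and $w$ cannot be written as $w=w'w''$ with $w',w''\neq e$ and $\supp(w')\cap\supp(w'')=\emptyset$. A Bruhat irreducible $w$ is almost reducible at $(J,i)$ if $w=w^Jw_J$ is a BP-decomposition with $\supp(w^J)\cap J=\{s_i\}$ and $s_i\notin D_L(w)$, $s_i\notin D_R(w)$. *)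

From mathcomp Require Import all_boot all_fingroup.
Set Implicit Arguments. Unset Strict Implicit. Unset Printing Implicit Defensive.

(* Generators are indexed 0-based by k : 'I_n ; k stands for the paper's
   s_{k+1} = (k+1  k+2), realised as the transposition of the positions
   k and k+1 of 'I_n.+1.  The group law is mathcomp's permutation product. *)
Section Coxeter.
Variable n : nat.

Definition sgen (k : 'I_n) : 'S_n.+1 :=
  tperm (widen_ord (leqnSn n) k) (lift ord0 k).

Definition prod_word (t : seq 'I_n) : 'S_n.+1 := (\prod_(k <- t) sgen k)%g.

(* Coxeter length: least size of a word with product w.  Every element of
   S_{n+1} has length <= n(n+1)/2 < (n+1)^2, so the search bound is harmless. *)
Definition coxlen (w : 'S_n.+1) : nat :=
  find (fun m => [exists t : m.-tuple 'I_n, prod_word t == w])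
       (iota 0 (n.+1 ^ 2)).

Definition supp (x : 'S_n.+1) : {set 'I_n} :=
  [set k | [exists t : (coxlen x).-tuple 'I_n, (prod_word t == x) && (k \in t)]].

Definition DL (x : 'S_n.+1) : {set 'I_n} :=
  [set k | coxlen (sgen k * x)%g < coxlen x].
Definition DR (x : 'S_n.+1) : {set 'I_n} :=
  [set k | coxlen (x * sgen k)%g < coxlen x].

Definition WJ (J : {set 'I_n}) : {set 'S_n.+1} := <<[set sgen j | j in J]>>%g.

Definition parabolic_decomp (J : {set 'I_n}) (x xJup xJdown : 'S_n.+1) : Prop :=
  [/\ x = (xJup * xJdown)%g, xJdown \in WJ J &
      forall y, y \in WJ J -> coxlen xJup <= coxlen (x * y)%g].

Definition BP_decomp (J : {set 'I_n}) (x xJup xJdown : 'S_n.+1) : Prop :=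
  parabolic_decomp J x xJup xJdown /\ (supp xJup :&: J \subset DL xJdown).

Definition bruhat_irreducible (w : 'S_n.+1) : Prop :=
  supp w = [set: 'I_n] /\
  ~ exists w1 w2 : 'S_n.+1, [/\ w = (w1 * w2)%g, w1 != 1%g, w2 != 1%g &
                               supp w1 :&: supp w2 = set0].

Definition almost_reducible (w : 'S_n.+1) (J : {set 'I_n}) (i : 'I_n) : Prop :=
  bruhat_irreducible w /\
  exists wJup wJdown : 'S_n.+1,
    [/\ BP_decomp J w wJup wJdown, supp wJup :&: J = [set i],
        i \notin DL w & i \notin DR w].

End Coxeter.

From mathcomp Require Import all_boot all_fingroup.
From mathcomp Require Import zify.

(* Write the symmetric group as permutations of {1, ..., n}.  A generator s_k
   lies in supp x exactly when x does not map {1, ..., k} into itself, so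
   supp (x y) is contained in supp x ∪ supp y, and an x with s_c ∉ supp x is a
   commuting product of a factor supported left of c and one supported right of c.

   Let w = u v with u = w^J and v = w_J, so that supp v ⊆ J and supp u ∩ J = {s_i}.
   If some s_c ∉ J separated s_i from a generator of J, splitting v at c would
   write w as a product of two non-trivial factors with disjoint supports; so would
   splitting u at an extreme generator s_c ≠ s_i of J that is not an end of the
   Dynkin diagram.  Hence J is an interval containing s_i which runs to the end of
   the diagram on every side on which it goes beyond s_i.  It cannot go beyond s_i
   on both sides: then s_i would be the only element of supp u among s_(i-1), s_i,
   s_(i+1), which makes s_i a right descent of u, against the minimality of u in
   u W_J.  Nor can J = {s_i}: then v = s_i, since s_i ∈ D_L(v), and the minimality
   of u makes s_i a right descent of w = u s_i. *)

Set Implicit Arguments. Unset Strict Implicit. Unset Printing Implicit Defensive.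
Local Open Scope group_scope.

Lemma perm_closed_pred (T : finType) (x : {perm T}) (P : pred T) :
  (forall p, P p -> P (x p)) -> forall p, P (x p) = P p.
Proof.
move=> xP p; apply/esym/(fclosed1 (f := x)).
apply: intro_closed; first exact/fconnect_sym/perm_inj.
by move=> q _ /eqP <-; apply: xP.
Qed.

Section SymmetricGroup.
Variable n : nat.
Implicit Types (x y a b : 'S_n.+1) (k c : 'I_n) (j : nat) (t : seq 'I_n).

Local Notation lo k := (widen_ord (leqnSn n) k).
Local Notation hi k := (lift ord0 k).

Lemma sgenE k (p : 'I_n.+1) :
  (sgen k p : nat) = if (p : nat) == k then k.+1 else if (p : nat) == k.+1 then (k : nat) else p.
Proof.
rewrite /sgen; case: tpermP => [->|->|/eqP lo_p /eqP hi_p] /=; first by rewrite eqxx.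
  by rewrite /bump leq0n eqn_leq ltnn eqxx.
rewrite -!(inj_eq val_inj) /= /bump leq0n add1n in lo_p hi_p.
by case: eqP => [|_]; [lia | case: eqP; lia].
Qed.

Lemma sgenK k : sgen k * sgen k = 1.
Proof. exact: tperm2. Qed.

Lemma sgen_lo k : sgen k (lo k) = hi k.
Proof. exact: tpermL. Qed.

Lemma sgen_hi k : sgen k (hi k) = lo k.
Proof. exact: tpermR. Qed.

Lemma val_hi k : hi k = k.+1 :> nat.
Proof. by []. Qed.

Lemma lo_neq_hi k : lo k != hi k.
Proof. by apply/eqP => /(congr1 val); rewrite /= /bump leq0n; lia. Qed.

Lemma prod_word_nil : prod_word [::] = 1 :> 'S_n.+1.
Proof. by rewrite /prod_word big_nil. Qed.

Lemma prod_word_rcons t k : prod_word (rcons t k) = prod_word t * sgen k.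
Proof. by rewrite /prod_word big_rcons. Qed.

(** * Stable initial segments *)

Definition prefix_stable x j := [forall p : 'I_n.+1, (p <= j) ==> (x p <= j)].

Lemma prefix_stableP x j :
  reflect (forall p : 'I_n.+1, p <= j -> x p <= j) (prefix_stable x j).
Proof. apply: (iffP forallP) => xj p; [exact/implyP | apply/implyP; apply: xj]. Qed.

Lemma prefix_stable_mem x j : prefix_stable x j -> forall p, (x p <= j) = (p <= j).
Proof. by move/prefix_stableP=> xj; apply: (perm_closed_pred (P := fun q : 'I_n.+1 => q <= j)). Qed.

Lemma prefix_stableV x j : prefix_stable x^-1 j = prefix_stable x j.
Proof.
suff sV y : prefix_stable y j -> prefix_stable y^-1 j by apply/idP/idP => /sV; rewrite ?invgK.
by move=> yj; apply/prefix_stableP => p; rewrite -(prefix_stable_mem yj (y^-1 p)) permKV.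
Qed.

Lemma prefix_stableM x y j :
  prefix_stable x j -> prefix_stable y j -> prefix_stable (x * y) j.
Proof.
by move=> /prefix_stableP xj /prefix_stableP yj; apply/prefix_stableP => p /xj/yj; rewrite permM.
Qed.

Lemma prefix_stable1 j : prefix_stable 1 j.
Proof. by apply/prefix_stableP => p; rewrite perm1. Qed.

Lemma prefix_stable_top x j : n <= j -> prefix_stable x j.
Proof. by move=> le_nj; apply/prefix_stableP => p _; have := ltn_ord (x p); lia. Qed.

Lemma prefix_stable_sgen k j : k != j :> nat -> prefix_stable (sgen k) j.
Proof.
move=> kj; apply/prefix_stableP => p pj; rewrite sgenE.
by case: eqP => [|_]; [lia | case: eqP; lia].
Qed.

Lemma prefix_stable_word t k : k \notin t -> prefix_stable (prod_word t) k.
Proof.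
rewrite /prod_word; elim: t => [|a t IHt]; first by rewrite big_nil prefix_stable1.
rewrite inE negb_or big_cons => /andP[ka kt].
by apply: prefix_stableM (IHt kt); apply: prefix_stable_sgen; rewrite eq_sym.
Qed.

Lemma prefix_stable_restr x y j :
  (forall p, y p = x p \/ y p = p) -> prefix_stable x j -> prefix_stable y j.
Proof.
by move=> yx /prefix_stableP xj; apply/prefix_stableP => p pj; case: (yx p) => ->; auto.
Qed.

(** * Inversions and the Coxeter length *)

Definition inversions x :=
  [set pq : 'I_n.+1 * 'I_n.+1 | (pq.1 < pq.2) && (x pq.2 < x pq.1)].

Definition ninv x := #|inversions x|.

Definition rdescent x k := x^-1 (hi k) < x^-1 (lo k).

Lemma ninv1 : ninv 1 = 0.
Proof.
apply/eqP; rewrite cards_eq0; apply/eqP/setP => -[p q].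
by rewrite !inE /= !perm1; apply/negbTE; lia.
Qed.

Lemma sgen_ltn k (p q : 'I_n.+1) :
  ~~ (((p : nat) == k) && ((q : nat) == k.+1)) ->
  ~~ (((p : nat) == k.+1) && ((q : nat) == k)) ->
  (sgen k q < sgen k p) = (q < p).
Proof. by rewrite !sgenE; do !case: ifP; lia. Qed.

(* Right multiplication by [sgen k] exchanges the values [k] and [k+1], which only
   toggles the pair of positions holding them. *)
Lemma ninv_mul_sgen x k : ninv (x * sgen k) + rdescent x k = ninv x + ~~ rdescent x k.
Proof.
rewrite /rdescent; have xa : x (x^-1 (lo k)) = lo k by rewrite permKV.
have xb : x (x^-1 (hi k)) = hi k by rewrite permKV.
move: (x^-1 (lo k)) (x^-1 (hi k)) xa xb => a b xa xb.
have a_b : (a : nat) != b by apply: contra_neq (lo_neq_hi k) => /val_inj ab; rewrite -xa -xb ab.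
have val_a p : (x p : nat) = k -> p = a.
  by move=> xp; apply: (@perm_inj _ x); rewrite xa; apply: val_inj.
have val_b p : (x p : nat) = k.+1 -> p = b.
  by move=> xp; apply: (@perm_inj _ x); rewrite xb; apply: val_inj.
pose pi := if a < b then (a, b) else (b, a).
have out_pi : inversions (x * sgen k) :\ pi = inversions x :\ pi.
  apply/setP => -[p q]; rewrite !inE /= !permM.
  case: eqVneq => //= pq_pi; case: ltnP => //= lt_pq.
  apply: sgen_ltn; apply/negP => /andP[/eqP pk /eqP qk]; move: pq_pi.
    by rewrite (val_a _ pk) (val_b _ qk) in lt_pq *; rewrite /pi lt_pq eqxx.
  by rewrite (val_a _ qk) (val_b _ pk) in lt_pq *; rewrite /pi ltnNge (ltnW lt_pq) eqxx.
have pi_xs : (pi \in inversions (x * sgen k)) = (a < b).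
  rewrite /pi; case: (ltnP a b) => ab;
  by rewrite inE /= !permM xa xb sgen_lo sgen_hi val_hi /=; lia.
have pi_x : (pi \in inversions x) = (b < a).
  by rewrite /pi; case: (ltnP a b) => ab; rewrite inE /= xa xb val_hi /=; lia.
rewrite /ninv (cardsD1 pi (inversions (x * sgen k))) (cardsD1 pi (inversions x)).
have -> : ~~ (b < a) = (a < b) by lia.
by rewrite out_pi pi_xs pi_x addnAC [RHS]addnAC (addnC (a < b)).
Qed.

Lemma ninv_prod_word t : ninv (prod_word t) <= size t.
Proof.
elim/last_ind: t => [|t k IHt]; first by rewrite prod_word_nil ninv1.
by rewrite prod_word_rcons size_rcons; have := ninv_mul_sgen (prod_word t) k; lia.
Qed.

Lemma increasing_eq1 y : (forall k, y (lo k) < y (hi k)) -> y = 1.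
Proof.
move=> y_inc; have y_ge m (lt_m : m < n.+1) : m <= y (Ordinal lt_m).
  elim: m lt_m => // m IHm lt_m; have lt_mn : m < n by [].
  have := y_inc (Ordinal lt_mn); have := IHm (ltnW lt_m).
  have -> : lo (Ordinal lt_mn) = Ordinal (ltnW lt_m) by apply: val_inj.
  have -> : hi (Ordinal lt_mn) = Ordinal lt_m by apply: val_inj.
  lia.
have {}y_ge (p : 'I_n.+1) : p <= y p by case: p y_ge.
apply/permP => p; apply/val_inj/eqP; rewrite perm1 eqn_leq y_ge andbT.
have y_closed (q : 'I_n.+1) : y p <= q -> y p <= y q by move/leq_trans; apply.
by have := perm_closed_pred (P := fun q : 'I_n.+1 => y p <= q) y_closed p; rewrite leqnn.
Qed.

Lemma rdescentN x k : ~~ rdescent x k = (x^-1 (lo k) < x^-1 (hi k)).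
Proof. by rewrite -leqNgt ltn_neqAle val_eqE (inj_eq (@perm_inj _ _)) lo_neq_hi. Qed.

Lemma no_rdescent_eq1 x : (forall k, ~~ rdescent x k) -> x = 1.
Proof.
move=> x_asc; rewrite -(invgK x) (increasing_eq1 (y := x^-1)) ?invg1 // => k.
by rewrite -rdescentN.
Qed.

Lemma reduced_word_exists x : exists2 t, prod_word t = x & size t = ninv x.
Proof.
have [m] := ubnP (ninv x); elim: m x => // m IHm x /ltnSE le_xm.
case: (pickP (rdescent x)) => [k xk | x_asc]; last first.
  rewrite (no_rdescent_eq1 (fun k => negbT (x_asc k))).
  by exists [::]; rewrite ?prod_word_nil ?ninv1.
have := ninv_mul_sgen x k; rewrite xk /= => ninv_xs.
have [t xs_t size_t] := IHm (x * sgen k) ltac:(lia).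
exists (rcons t k); first by rewrite prod_word_rcons xs_t -mulgA sgenK mulg1.
by rewrite size_rcons size_t; lia.
Qed.

Lemma ninv_ltn x : ninv x < (n.+1 ^ 2)%N.
Proof.
have -> : (n.+1 ^ 2)%N = #|[set: 'I_n.+1 * 'I_n.+1]| by rewrite cardsT card_prod card_ord mulnn.
apply/proper_card; rewrite properT.
apply/negP => /eqP inv_x; have : (ord0, ord0) \in inversions x by rewrite inv_x inE.
by rewrite inE ltnn.
Qed.

Lemma coxlenE x : coxlen x = ninv x.
Proof.
pose P m := [exists t : m.-tuple 'I_n, prod_word t == x].
have P_x : P (ninv x).
  have [t t_x /eqP size_t] := reduced_word_exists x.
  by apply/existsP; exists (Tuple size_t); rewrite /= t_x.
have notP m : m < ninv x -> ~~ P m.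
  move=> lt_m; apply/existsP => -[t /eqP t_x].
  by have := ninv_prod_word t; rewrite t_x size_tuple; lia.
rewrite /coxlen -/P; case: findP => [/hasPn/(_ (ninv x))|m].
  by rewrite mem_iota ninv_ltn P_x => /(_ isT).
rewrite size_iota => lt_m /(_ 0); rewrite nth_iota // add0n => P_m before_m.
case: (ltngtP m (ninv x)) => [/notP|lt_xm|] //; first by rewrite P_m.
by have := before_m 0 _ lt_xm; rewrite nth_iota ?ninv_ltn // add0n P_x.
Qed.

Lemma coxlen1 : coxlen (1 : 'S_n.+1) = 0.
Proof. by rewrite coxlenE ninv1. Qed.

(** * Supports and descents *)

Lemma prefix_unstableP x j :
  reflect (exists2 p : 'I_n.+1, p <= j & j < x p) (~~ prefix_stable x j).
Proof.
apply: (iffP forallPn) => [[p] | [p pj jxp]]; last by exists p; rewrite pj -ltnNge.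
by rewrite negb_imply -ltnNge => /andP[]; exists p.
Qed.

Lemma prefix_unstable_mul_sgen x k j :
  ~~ prefix_stable x j -> ~~ rdescent x k -> ~~ prefix_stable (x * sgen k) j.
Proof.
move=> /prefix_unstableP[p pj jxp]; rewrite rdescentN => x_asc; apply/prefix_unstableP.
have [xp_hi | xp_hi] := eqVneq (x p : nat) k.+1; last first.
  by exists p; rewrite // permM sgenE; move: xp_hi; do !case: ifP; lia.
have [kj | kj] := eqVneq (k : nat) j; last first.
  by exists p; rewrite // permM sgenE xp_hi eqn_leq ltnn eqxx /=; lia.
exists (x^-1 (lo k)); last by rewrite permM permKV sgen_lo val_hi kj.
have p_hi : p = x^-1 (hi k) by apply: (@perm_inj _ x); rewrite permKV; apply: val_inj.
by move: x_asc pj; rewrite -kj p_hi; lia.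
Qed.

Lemma reduced_word_unstable t k :
  size t = ninv (prod_word t) -> k \in t -> ~~ prefix_stable (prod_word t) k.
Proof.
elim/last_ind: t => [|t a IHt] //; rewrite prod_word_rcons size_rcons => red_ta.
have := ninv_mul_sgen (prod_word t) a; have := ninv_prod_word t.
have [x_desc | x_asc] := boolP (rdescent (prod_word t) a); first by rewrite -red_ta /=; lia.
rewrite -red_ta /= => le_t step; have red_t : size t = ninv (prod_word t) by lia.
rewrite mem_rcons inE => /predU1P[-> | kt].
  have [x_a | x_a] := boolP (prefix_stable (prod_word t) a); last first.
    exact: prefix_unstable_mul_sgen x_a x_asc.
  apply/prefix_unstableP; exists ((prod_word t)^-1 (lo a)).
    by rewrite -(prefix_stable_mem x_a) permKV.
  by rewrite permM permKV sgen_lo val_hi.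
exact: prefix_unstable_mul_sgen (IHt red_t kt) x_asc.
Qed.

Lemma suppE x : supp x = [set k : 'I_n | ~~ prefix_stable x k].
Proof.
apply/setP => k; rewrite !inE; apply/existsP/idP => [[t /andP[/eqP t_x k_t]] | x_k].
  by rewrite -t_x reduced_word_unstable // size_tuple t_x coxlenE.
have [t t_x size_t] := reduced_word_exists x.
have /eqP size_t' : size t = coxlen x by rewrite coxlenE.
exists (Tuple size_t'); rewrite /= t_x eqxx /=.
by apply: contraR x_k => k_t; rewrite -t_x prefix_stable_word.
Qed.

Lemma supp_mul x y : supp (x * y) \subset supp x :|: supp y.
Proof.
apply/subsetP => k; rewrite !suppE !inE -negb_and; apply: contra => /andP[].
exact: prefix_stableM.
Qed.

Lemma suppV x : supp x^-1 = supp x.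
Proof. by apply/setP => k; rewrite !suppE !inE prefix_stableV. Qed.

Lemma prefix_stable_notin_supp x j :
  (forall k, k = j :> nat -> k \notin supp x) -> prefix_stable x j.
Proof.
move=> notin_x; have [lt_jn | le_nj] := ltnP j n; last exact: prefix_stable_top.
by have := notin_x (Ordinal lt_jn) erefl; rewrite suppE inE negbK.
Qed.

Lemma supp_WJ (J : {set 'I_n}) v : v \in WJ J -> supp v \subset J.
Proof.
move=> /gen_prodgP[m [c c_J ->]]; apply/subsetP => k; rewrite suppE inE; apply: contraR => kJ.
apply: (big_ind (prefix_stable^~ k)); first exact: prefix_stable1.
  by move=> y z yk zk; exact: (prefix_stableM yk zk).
move=> l _; have /imsetP[j jJ ->] := c_J l; apply: prefix_stable_sgen.
by apply: contraNneq kJ => /val_inj <-.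
Qed.

Lemma prefix_stable_split x c : prefix_stable x c ->
  exists xL xR, [/\ x = xL * xR, x = xR * xL,
    supp xL \subset supp x :&: [set k : 'I_n | k < c]
  & supp xR \subset supp x :&: [set k : 'I_n | c < k]].
Proof.
move=> x_c; have x_le p : (x p <= c) = (p <= c) := prefix_stable_mem x_c p.
have restr_inj (b : bool) : injective (fun p : 'I_n.+1 => if (p <= c) == b then x p else p).
  move=> p q /=; case: ifP => p_b; case: ifP => q_b //; first exact: perm_inj.
    by move=> e; move: q_b; rewrite -e x_le p_b.
  by move=> e; move: p_b; rewrite e x_le q_b.
pose xL := perm (restr_inj true); pose xR := perm (restr_inj false).
have xLE p : xL p = if p <= c then x p else p by rewrite permE /= eqb_id.
have xRE p : xR p = if p <= c then p else x p by rewrite permE /=; case: (p <= c).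
have restr_stable y k :
    (forall p, y p = x p \/ y p = p) -> ~~ prefix_stable y k -> ~~ prefix_stable x k.
  by move=> yx; apply: contra; apply: prefix_stable_restr.
exists xL, xR; split.
- by apply/permP => p; rewrite permM xLE xRE; case pc: (p <= c) => /=; rewrite ?x_le pc.
- by apply/permP => p; rewrite permM xLE xRE; case pc: (p <= c) => /=; rewrite ?x_le pc.
- apply/subsetP => k; rewrite !suppE !inE => xL_k.
  apply/andP; split; first by apply: restr_stable xL_k => p; rewrite xLE; case: ifP; auto.
  rewrite ltnNge; apply: contra xL_k => ck; apply/prefix_stableP => p pk.
  by rewrite xLE; case: ifP => pc; [rewrite -x_le in pc |]; lia.
- apply/subsetP => k; rewrite !suppE !inE => xR_k.
  apply/andP; split; first by apply: restr_stable xR_k => p; rewrite xRE; case: ifP; auto.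
  rewrite ltnNge; apply: contra xR_k => kc; apply/prefix_stableP => p pk.
  by rewrite xRE ifT //; lia.
Qed.

Definition ray_at c (A : {set 'I_n}) := A = [set k : 'I_n | k < c] \/ A = [set k : 'I_n | c < k].

Lemma supp_split x c A : c \notin supp x -> ray_at c A ->
  exists a b, [/\ x = a * b, x = b * a, supp a \subset supp x :&: A & supp b \subset ~: A].
Proof.
move=> c_x ray_A; have /prefix_stable_split[xL [xR [xLR xRL sL sR]]] : prefix_stable x c.
  by move: c_x; rewrite suppE inE negbK.
case: ray_A => ->; [exists xL, xR | exists xR, xL]; split => //.
  by apply: (subset_trans sR); apply/subsetP => k; rewrite !inE => /andP[_ /ltnW]; rewrite leqNgt.
by apply: (subset_trans sL); apply/subsetP => k; rewrite !inE => /andP[_ /ltnW]; rewrite leqNgt.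
Qed.

Lemma DRE x k : (k \in DR x) = rdescent x k.
Proof. by rewrite inE !coxlenE; have := ninv_mul_sgen x k; case: (rdescent x k) => /=; lia. Qed.

Lemma rdescent_mul_sgen x k : rdescent (x * sgen k) k = ~~ rdescent x k.
Proof. by rewrite rdescentN /rdescent invMg /sgen tpermV !permM tpermL tpermR. Qed.

Lemma rdescent_isolated x i : i \in supp x ->
  (forall k, (k.+1 == i) || (k == i.+1 :> nat) -> k \notin supp x) -> rdescent x i.
Proof.
move=> + nbr; rewrite -suppV suppE inE => /prefix_unstableP[p pi ip].
have y_stable j : (j.+1 == i) || (j == i.+1) -> prefix_stable x^-1 j.
  by move=> ji; apply: prefix_stable_notin_supp => k kj; rewrite suppV nbr // kj.
have y_le (q : 'I_n.+1) : q <= i.+1 -> x^-1 q <= i.+1.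
  by apply/prefix_stableP/y_stable; rewrite eqxx orbT.
have y_ge (q : 'I_n.+1) : i <= q -> i <= x^-1 q.
  case: (posnP i) => [-> // | i_gt0 iq].
  have := prefix_stable_mem (y_stable i.-1 _) q; rewrite prednK // eqxx => /(_ isT); lia.
have y_p : x^-1 p = i.+1 :> nat by have := y_le p; lia.
have y_hi : x^-1 (hi i) = i :> nat.
  have : x^-1 (hi i) != x^-1 p.
    by rewrite (inj_eq (@perm_inj _ _)); apply: contraTneq pi => <-; rewrite val_hi ltnn.
  by rewrite -val_eqE /= y_p; have := y_le (hi i); have := y_ge (hi i); rewrite val_hi; lia.
have : x^-1 (lo i) != x^-1 (hi i) by rewrite (inj_eq (@perm_inj _ _)) lo_neq_hi.
by rewrite /rdescent -val_eqE /= y_hi; have := y_ge (lo i); rewrite /=; lia.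
Qed.

Lemma parabolic_notin_DR (J : {set 'I_n}) x u v k :
  parabolic_decomp J x u v -> k \in J -> k \notin DR u.
Proof.
case=> -> v_J u_min k_J; rewrite inE -leqNgt.
have := u_min (v^-1 * sgen k); rewrite -mulgA mulVKg; apply.
by rewrite groupM ?groupV // mem_gen ?imset_f.
Qed.

Lemma WJ_set1 k v : v \in WJ [set k] -> v = 1 \/ v = sgen k.
Proof.
rewrite /WJ imset_set1 => /cycleP[m ->].
have s2 : sgen k ^+ 2 = 1 by rewrite expgS expg1 sgenK.
rewrite -(expg_mod m s2); case: (m %% 2) (ltn_pmod m (isT : 0 < 2)) => [|[|]] // _.
  by left; rewrite expg0.
by right; rewrite expg1.
Qed.

Lemma bruhat_irreducible_factor w a b : bruhat_irreducible w ->
  w = a * b -> supp a :&: supp b = set0 -> supp a = setT \/ supp b = setT.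
Proof.
case=> w_full w_irr w_ab ab0; have [a1 | a_ne1] := eqVneq a 1.
  by right; rewrite -w_full w_ab a1 mul1g.
have [b1 | b_ne1] := eqVneq b 1; first by left; rewrite -w_full w_ab b1 mulg1.
by case: w_irr; exists a, b.
Qed.

End SymmetricGroup.

Section AlmostReducible.
Variables (n : nat) (w u v : 'S_n.+1) (J : {set 'I_n}) (i : 'I_n).
Hypotheses (w_irr : bruhat_irreducible w) (w_uv : w = u * v) (v_WJ : v \in WJ J)
  (u_J : supp u :&: J = [set i]).

Let i_uJ : (i \in supp u) && (i \in J). Proof. by rewrite -in_setI u_J set11. Qed.

Lemma notin_supp_u k : k \in J -> k != i -> k \notin supp u.
Proof. by move=> kJ; apply: contra => ku; rewrite -in_set1 -u_J inE ku. Qed.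

Lemma J_convex c A j : c \notin J -> ray_at c A -> j \in J -> j \in A -> i \in A.
Proof.
move=> cJ rayA jJ jA; apply/negPn/negP => iA; have ji : j != i by apply: contraNneq iA => <-.
have v_J := supp_WJ v_WJ.
have [a [b [_ v_ba a_vA b_A]]] := supp_split (contra (subsetP v_J c) cJ) rayA.
have w_uba : w = (u * b) * a by rewrite w_uv {1}v_ba mulgA.
have disj : supp (u * b) :&: supp a = set0.
  apply/setP => k; rewrite in_set0; apply/negbTE/setIP => -[kub ka].
  have /setIP[kv kA] := subsetP a_vA k ka.
  have /setUP[ku | kb] := subsetP (supp_mul u b) k kub.
    by move: ku; apply/negP/notin_supp_u; [exact: (subsetP v_J) | apply: contraNneq iA => <-].
  by have := subsetP b_A k kb; rewrite inE kA.
case: (bruhat_irreducible_factor w_irr w_uba disj) => full.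
  have /(subsetP (supp_mul u b))/setUP[ju | jb] : j \in supp (u * b) by rewrite full inE.
    by rewrite (negPf (notin_supp_u jJ ji)) in ju.
  by have := subsetP b_A j jb; rewrite inE jA.
have /setIP[_ iA'] : i \in supp v :&: A by rewrite (subsetP a_vA) // full inE.
by rewrite iA' in iA.
Qed.

Lemma J_ray_empty c A : c \in J -> c != i -> ray_at c A -> A \subset ~: J -> A = set0.
Proof.
move=> cJ ci rayA AJ; apply/setP => d; rewrite in_set0; apply/negbTE/negP => dA.
have v_J := supp_WJ v_WJ.
have [a [b [u_ab _ a_uA b_A]]] := supp_split (notin_supp_u cJ ci) rayA.
have w_abv : w = a * (b * v) by rewrite w_uv u_ab mulgA.
have disj : supp a :&: supp (b * v) = set0.
  apply/setP => k; rewrite in_set0; apply/negbTE/setIP => -[ka kbv].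
  have /setIP[_ kA] := subsetP a_uA k ka.
  have /setUP[kb | kv] := subsetP (supp_mul b v) k kbv.
    by have := subsetP b_A k kb; rewrite inE kA.
  by have := subsetP AJ k kA; rewrite inE (subsetP v_J k kv).
case: (bruhat_irreducible_factor w_irr w_abv disj) => full.
  have /setIP[_ iA] : i \in supp u :&: A by rewrite (subsetP a_uA) // full inE.
  by have := subsetP AJ i iA; case/andP: i_uJ => _ iJ; rewrite inE iJ.
have /(subsetP (supp_mul b v))/setUP[db | dv] : d \in supp (b * v) by rewrite full inE.
  by have := subsetP b_A d db; rewrite inE dA.
by have := subsetP AJ d dA; rewrite inE (subsetP v_J d dv).
Qed.

Hypothesis u_DR : forall k, k \in J -> k \notin DR u.

Lemma J_neighbours (a b : 'I_n) : a.+1 = i -> b = i.+1 :> nat -> a \in J -> b \notin J.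
Proof.
move=> ai bi aJ; apply/negP => bJ; case/andP: i_uJ => iu iJ.
have /negP := u_DR iJ; apply; rewrite DRE; apply: rdescent_isolated iu _ => k.
case/orP => /eqP ki.
  have -> : k = a by apply/val_inj/succn_inj; rewrite ki.
  by apply: notin_supp_u aJ _; apply/eqP => a_i; move: ai; rewrite a_i; clear; lia.
have -> : k = b by apply: val_inj; rewrite /= ki.
by apply: notin_supp_u bJ _; apply/eqP => b_i; move: bi; rewrite b_i; clear; lia.
Qed.

Lemma J_neq_set1 : i \in DL v -> i \notin DR w -> J != [set i].
Proof.
move=> i_DLv i_DRw; apply/eqP => J_i; case/andP: i_uJ => _ iJ.
move: v_WJ; rewrite J_i => /WJ_set1[v1 | v_s].
  by move: i_DLv; rewrite v1 inE mulg1 coxlen1.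
by move: i_DRw; rewrite w_uv v_s DRE rdescent_mul_sgen -DRE (u_DR iJ).
Qed.

End AlmostReducible.

Section IntervalAroundI.
Variables (n : nat) (J : {set 'I_n}) (i : 'I_n).
Implicit Types (c d j k l r : 'I_n) (A : {set 'I_n}).
Hypotheses (J_convex : forall c A j, c \notin J -> ray_at c A -> j \in J -> j \in A -> i \in A)
  (J_ray_empty : forall c A, c \in J -> c != i -> ray_at c A -> A \subset ~: J -> A = set0).

Let convexL c j : c \notin J -> j \in J -> j < c -> i < c.
Proof. by move=> cJ jJ jc; have := J_convex cJ (or_introl erefl) jJ; rewrite !inE; apply. Qed.

Let convexR c j : c \notin J -> j \in J -> c < j -> c < i.
Proof. by move=> cJ jJ cj; have := J_convex cJ (or_intror erefl) jJ; rewrite !inE; apply. Qed.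

Let below_min c d : c \in J -> c != i -> d < c -> exists2 j, j \in J & j < c.
Proof.
move=> cJ ci dc; case: (pickP [pred j | (j \in J) && (j < c)]) => [j /andP[] | noj].
  by exists j.
have out : [set k : 'I_n | k < c] \subset ~: J.
  by apply/subsetP => k; rewrite !inE => kc; apply/negP => kJ; have := noj k; rewrite /= kJ kc.
by have /setP/(_ d) := J_ray_empty cJ ci (or_introl erefl) out; rewrite !inE dc.
Qed.

Let above_max c d : c \in J -> c != i -> c < d -> exists2 j, j \in J & c < j.
Proof.
move=> cJ ci cd; case: (pickP [pred j | (j \in J) && (c < j)]) => [j /andP[] | noj].
  by exists j.
have out : [set k : 'I_n | c < k] \subset ~: J.
  by apply/subsetP => k; rewrite !inE => ck; apply/negP => kJ; have := noj k; rewrite /= kJ ck.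
by have /setP/(_ d) := J_ray_empty cJ ci (or_intror erefl) out; rewrite !inE cd.
Qed.

Lemma J_pred_mem l : l \in J -> l < i -> exists2 a : 'I_n, a.+1 = i & a \in J.
Proof.
move=> lJ li; have lt_a : i.-1 < n by rewrite (leq_ltn_trans (leq_pred i)).
exists (Ordinal lt_a); first by rewrite /= prednK //; lia.
apply/negPn/negP => aJ; case: (ltnP l i.-1) => [l_a | a_l].
  by have := convexL aJ lJ l_a; rewrite /=; lia.
have a_l' : Ordinal lt_a = l by apply: val_inj => /=; lia.
by rewrite a_l' lJ in aJ.
Qed.

Lemma J_succ_mem r : r \in J -> i < r -> exists2 b : 'I_n, b = i.+1 :> nat & b \in J.
Proof.
move=> rJ ir; have lt_b : i.+1 < n by rewrite (leq_ltn_trans ir).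
exists (Ordinal lt_b) => //; apply/negPn/negP => bJ; case: (ltnP i.+1 r) => [b_r | r_b].
  by have := convexR bJ rJ b_r; rewrite /=; lia.
have b_r' : Ordinal lt_b = r by apply: val_inj => /=; lia.
by rewrite b_r' rJ in bJ.
Qed.

Lemma J_prefix l : l \in J -> l < i -> (forall k, k \in J -> k <= i) ->
  J = [set k : 'I_n | k <= i].
Proof.
move=> lJ li J_le; apply/setP => k; rewrite inE; apply/idP/idP => [/J_le // | ki].
apply/negPn/negP => kJ; case: (arg_minnP (@nat_of_ord n) lJ) => m mJ m_min.
have ml := m_min l lJ.
have [mk | km] := ltnP m k; first by have := convexL kJ mJ mk; lia.
have k_m : k < m by rewrite ltn_neqAle km andbT; apply: contraNneq kJ => /val_inj ->.
have mi : m != i by apply/eqP => m_i; move: ml; rewrite m_i; lia.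
by have [j jJ jm] := below_min mJ mi k_m; have := m_min j jJ; lia.
Qed.

Lemma J_suffix r : r \in J -> i < r -> (forall k, k \in J -> i <= k) ->
  J = [set k : 'I_n | i <= k].
Proof.
move=> rJ ir J_ge; apply/setP => k; rewrite inE; apply/idP/idP => [/J_ge // | ik].
apply/negPn/negP => kJ; case: (arg_maxnP (@nat_of_ord n) rJ) => m mJ m_max.
have rm := m_max r rJ.
have [km | mk] := ltnP k m; first by have := convexR kJ mJ km; lia.
have m_k : m < k by rewrite ltn_neqAle mk andbT; apply: contraNneq kJ => /val_inj <-.
have mi : m != i by apply/eqP => m_i; move: rm; rewrite m_i; lia.
by have [j jJ mj] := above_max mJ mi m_k; have := m_max j jJ; lia.
Qed.

Lemma prefix_or_suffix : i \in J ->
  (forall a b : 'I_n, a.+1 = i -> b = i.+1 :> nat -> a \in J -> b \notin J) ->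
  J != [set i] -> J = [set k : 'I_n | k <= i] \/ J = [set k : 'I_n | i <= k].
Proof.
move=> iJ J_nbrs J_ne.
case: (boolP [exists l in J, l < i]) => [/exists_inP[l lJ li] | /exists_inPn noL];
case: (boolP [exists r in J, i < r]) => [/exists_inP[r rJ ir] | /exists_inPn noR].
- have [a ai aJ] := J_pred_mem lJ li; have [b bi bJ] := J_succ_mem rJ ir.
  by exfalso; apply: (negP (J_nbrs a b ai bi aJ)).
- by left; apply: J_prefix lJ li _ => k /noR; rewrite -leqNgt.
- by right; apply: J_suffix rJ ir _ => k /noL; rewrite -leqNgt.
case/eqP: J_ne; apply/setP => k; rewrite inE; apply/idP/eqP => [kJ | -> //].
by apply: val_inj => /=; have := noL k kJ; have := noR k kJ; lia.
Qed.

End IntervalAroundI.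

Theorem proposition5p2 (n : nat) (w : 'S_n.+1) (J : {set 'I_n}) (i : 'I_n) :
  bruhat_irreducible w -> almost_reducible w J i ->
  J = [set k : 'I_n | k <= i] \/ J = [set k : 'I_n | i <= k].
Proof.
move=> _ [w_irr [u [v [[pd BP] u_J _ i_DRw]]]]; case: (pd) => w_uv v_WJ _.
have u_DR k : k \in J -> k \notin DR u := parabolic_notin_DR pd.
have i_uJ : i \in supp u :&: J by rewrite u_J set11.
have i_DLv : i \in DL v by apply: (subsetP BP).
apply: prefix_or_suffix.
- exact: J_convex w_irr w_uv v_WJ u_J.
- exact: J_ray_empty w_irr w_uv v_WJ u_J.
- by case/setIP: i_uJ.
- exact: J_neighbours u_J u_DR.
- exact: J_neq_set1 w_uv v_WJ u_J u_DR i_DLv i_DRw.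
Qed.
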